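(* Let $\mathcal{M} = (\Sigma_\Box, Q, q_{in}, q_{fin}, \delta)$ be a Turing machine. There exist a closed term $\mathtt{trans} \in \Lambda_{\mathtt{det}}$ and a constant $c$ (depending only on $\mathcal{M}$) such that for every value $k$ and every configuration $C$: (1) if a final configuration $D$ is reachable from $C$ in $n$ transition steps of $\mathcal{M}$, then $\mathtt{trans}\;k\;\ulcorner C\urcorner \to_{\mathtt{det}}^{m} k\;\ulcorner D\urcorner$ for some $m \le c\,(n+1)$; (2) if no final configuration is reachable from $C$, then $\mathtt{trans}\;k\;\ulcorner C\urcorner$ diverges, i.e. it has an infinite $\to_{\mathtt{det}}$-reduction sequence.
   Context: The deterministic $\lambda$-calculus $\Lambda_{\mathtt{det}}$ has terms and values given by the grammar: terms $t ::= v \mid t\,v$; values $v ::= \lambda x.t \mid x$. Evaluation contexts are $E ::= [\cdot] \mid E\,v$ (they never enter abstractions). The reduction $\to_{\mathtt{det}}$ is the closure under evaluation contexts of $(\lambda x.t)\,s \mapsto t\{x:=s\}$; $t \to_{\mathtt{det}}^n s$ means $t$ reduces to $s$ in exactly $n$ steps. Application associates to the left. Scott encoding: for a finite totally ordered alphabet $\Gamma = \{c_1,\dots,c_m\}$, $\ulcorner c_i\urcorner^{\Gamma} := \lambda x_1.\cdots.\lambda x_m.x_i$, $\ulcorner \varepsilon\urcorner^{\Gamma^*} := \lambda x_1.\cdots.\lambda x_m.\lambda y.y$ and $\ulcorner c_i r\urcorner^{\Gamma^*} := \lambda x_1.\cdots.\lambda x_m.\lambda y.\,x_i\,\ulcorner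 r\urcorner^{\Gamma^*}$. Turing machines: $\mathcal{M} = (\Sigma_\Box, Q, q_{in}, q_{fin}, \delta)$ where $\Sigma = \{a_1,\dots,a_n\}$ is a finite alphabet, $\Sigma_\Box = \Sigma\cup\{\Box\}$ with blank symbol $\Box\notin\Sigma$ ordered last, $Q=\{q_1,\dots,q_m\}$ is a finite ordered set of states (treated as an alphabet for encoding), $q_{in},q_{fin}\in Q$, and $\delta : Q\times\Sigma_\Box \rightharpoonup Q\times\Sigma_\Box\times\{\leftarrow,\rightarrow,\downarrow\}$ is defined exactly on pairs with first component $\neq q_{fin}$. A configuration is $(s,a,r,q)\in\Sigma_\Box^*\times\Sigma_\Box\times\Sigma_\Box^*\times Q$ (tape left of the head, head cell, tape right of the head, state); it is final if $q = q_{fin}$. The transition relation $\to_{\mathcal{M}}$: if $\delta(q,a) = (q',b,\downarrow)$ then $(s,a,r,q)\to_{\mathcal{M}}(s,b,r,q')$; if $\delta(q,a)=(q',b,\leftarrow)$ then $(s'c,a,r,q)\to_{\mathcal{M}}(s',c,br,q')$ and $(\varepsilon,a,r,q)\to_{\mathcal{M}}(\varepsilon,\Box,br,q')$; if $\delta(q,a)=(q',b,\rightarrow)$ then $(s,a,cr',q)\to_{\mathcal{M}}(sb,c,r',q')$ and $(s,a,\varepsilon,q)\to_{\mathcal{M}}(sb,\Box,\varepsilon,q')$. Encoding of configurations: $\ulcorner (s,a,r,q)\urcorner := \lambda x.\, x\,\ulcorner s^R\urcorner^{\Sigma_\Box^*}\,\ulcorner a\urcorner^{\Sigma_\Box}\,\ulcorner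 r\urcorner^{\Sigma_\Box^*}\,\ulcorner q\urcorner^{Q}$, where $s^R$ is the reverse of $s$. *)

From mathcomp Require Import all_boot.
Set Implicit Arguments. Unset Strict Implicit. Unset Printing Implicit Defensive.

Inductive term : Type :=
| Val : value -> term
| App : term -> value -> term
with value : Type :=
| Var : nat -> value
| Lam : term -> value.

Fixpoint lift_t (k : nat) (t : term) : term :=
  match t with
  | Val v => Val (lift_v k v)
  | App t v => App (lift_t k t) (lift_v k v)
  end
with lift_v (k : nat) (v : value) : value :=
  match v with
  | Var n => if n < k then Var n else Var n.+1
  | Lam t => Lam (lift_t k.+1 t)
  end.

Fixpoint subst_t (k : nat) (s : value) (t : term) : term :=
  match t with
  | Val v => Val (subst_v k s v)
  | App t v => App (subst_t k s t) (subst_v k s v)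
  end
with subst_v (k : nat) (s : value) (v : value) : value :=
  match v with
  | Var n => if n < k then Var n else if n == k then s else Var n.-1
  | Lam t => Lam (subst_t k.+1 (lift_v 0 s) t)
  end.

Fixpoint closed_t (k : nat) (t : term) : bool :=
  match t with
  | Val v => closed_v k v
  | App t v => closed_t k t && closed_v k v
  end
with closed_v (k : nat) (v : value) : bool :=
  match v with
  | Var n => n < k
  | Lam t => closed_t k.+1 t
  end.

Inductive det_step : term -> term -> Prop :=
| det_beta (t : term) (s : value) : det_step (App (Val (Lam t)) s) (subst_t 0 s t)
| det_ctx (t t' : term) (v : value) : det_step t t' -> det_step (App t v) (App t' v).

Inductive det_steps : nat -> term -> term -> Prop :=
| det_refl (t : term) : det_steps 0 t t
| det_cons (n : nat) (t t' u : term) : det_step t t' -> det_steps n t' u -> det_steps n.+1 t u.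

Definition diverges (t : term) : Prop :=
  exists f : nat -> term, f 0 = t /\ forall i, det_step (f i) (f i.+1).

Fixpoint nlam (k : nat) (t : term) : term :=
  match k with 0 => t | k'.+1 => Val (Lam (nlam k' t)) end.

(* alphabet of size N = {c_1,...,c_N}; character c_(i+1) is represented by i < N *)
(* \x_1 ... \x_N . x_(i+1) *)
Definition scott_char (N i : nat) : value := Lam (nlam N.-1 (Val (Var (N.-1 - i)))).

(* strings: eps = \x_1..\x_N.\y.y ; c_(i+1) r = \x_1..\x_N.\y. x_(i+1) <r> *)
Fixpoint scott_str (N : nat) (w : seq nat) : value :=
  Lam (nlam N (match w with
               | [::] => Val (Var 0)
               | i :: r => App (Val (Var (N - i))) (scott_str N r)
               end)).

Inductive move : Type := MLeft | MRight | MStay.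

(* Sigma = {a_1..a_n} (n = nsym), Sigma_box = 'I_(n+1) with blank = ord_max (last);
   Q = 'I_nst ordered as q_1 < ... < q_m. *)
Record TM : Type := {
  nsym : nat;
  nst : nat;
  q_in : 'I_nst;
  q_fin : 'I_nst;
  delta : 'I_nst -> 'I_nsym.+1 -> option ('I_nst * 'I_nsym.+1 * move);
  delta_dom : forall q a, isSome (delta q a) = (q != q_fin)
}.

Definition blank (M : TM) : 'I_(nsym M).+1 := ord_max.

(* configuration (s, a, r, q); s is the tape left of the head in left-to-right order *)
Definition config (M : TM) : Type :=
  (seq 'I_(nsym M).+1 * 'I_(nsym M).+1 * seq 'I_(nsym M).+1 * 'I_(nst M))%type.

Definition final (M : TM) (C : config M) : Prop := C.2 = @q_fin M.

Inductive tm_step (M : TM) : config M -> config M -> Prop :=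
| tm_stay s a r q q' b :
    @delta M q a = Some (q', b, MStay) -> tm_step (s, a, r, q) (s, b, r, q')
| tm_left s' c a r q q' b :
    @delta M q a = Some (q', b, MLeft) -> tm_step (rcons s' c, a, r, q) (s', c, b :: r, q')
| tm_left_edge a r q q' b :
    @delta M q a = Some (q', b, MLeft) -> tm_step ([::], a, r, q) ([::], @blank M, b :: r, q')
| tm_right s a c r' q q' b :
    @delta M q a = Some (q', b, MRight) -> tm_step (s, a, c :: r', q) (rcons s b, c, r', q')
| tm_right_edge s a q q' b :
    @delta M q a = Some (q', b, MRight) -> tm_step (s, a, [::], q) (rcons s b, @blank M, [::], q').

Inductive tm_steps (M : TM) : nat -> config M -> config M -> Prop :=
| tm_refl C : tm_steps 0 C C
| tm_cons n C C' D : tm_step C C' -> tm_steps n C' D -> tm_steps n.+1 C D.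

(* <(s,a,r,q)> = \x. x <s^R> <a> <r> <q> *)
Definition enc_config (M : TM) (C : config M) : value :=
  let: (s, a, r, q) := C in
  let N := (nsym M).+1 in
  Lam (App (App (App (App (Val (Var 0))
        (scott_str N (map (@nat_of_ord _) (rev s))))
        (scott_char N a))
        (scott_str N (map (@nat_of_ord _) r)))
        (scott_char (nst M) q)).

From mathcomp Require Import all_boot zify.
From Stdlib Require Import IndefiniteDescription.
Set Implicit Arguments. Unset Strict Implicit. Unset Printing Implicit Defensive.

(* The term [trans] runs a Scott-style interpreter [loop] (a self-applied
   [driver], hence a fixed point): on an encoded configuration it first selects
   the branch of the current state, then that of the scanned symbol, which holds
   the code of [delta q a]; this code rebuilds the successor configuration,
   moving a cell between the two Scott-encoded tapes, and calls [loop] again,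
   while in the final state it returns [\x. x <C>], which [trans] hands to the
   continuation [k]. Every machine step thus costs a positive number of
   reduction steps bounded by a constant depending only on the machine, which
   gives the linear bound and, for non-halting runs, an infinite reduction. *)

Scheme term_ind2 := Induction for term Sort Prop
with value_ind2 := Induction for value Sort Prop.
Combined Scheme term_value_ind from term_ind2, value_ind2.

Fixpoint inst_t (sg : seq value) (d : nat) (t : term) : term :=
  match t with
  | Val v => Val (inst_v sg d v)
  | App t v => App (inst_t sg d t) (inst_v sg d v)
  end
with inst_v (sg : seq value) (d : nat) (v : value) : value :=
  match v with
  | Var n => if n < d then Var n
             else if n - d < size sg then nth (Var 0) sg (n - d) else Var (n - size sg)
  | Lam t => Lam (inst_t sg d.+1 t)
  end.

Lemma closed_le :
  (forall t j k, closed_t j t -> j <= k -> closed_t k t) /\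
  (forall v j k, closed_v j v -> j <= k -> closed_v k v).
Proof.
apply: term_value_ind => /=.
- by move=> v IH j k; apply: IH.
- by move=> t IHt v IHv j k /andP[Ht Hv] jk; rewrite (IHt j) // (IHv j).
- by move=> n j k; lia.
- by move=> t IH j k Ht jk; apply: (IH j.+1).
Qed.

Lemma closed_v0 v k : closed_v 0 v -> closed_v k v.
Proof. by move=> Hv; apply: (proj2 closed_le v 0). Qed.

Lemma all_closed_v0 vs k : all (closed_v 0) vs -> all (closed_v k) vs.
Proof. by elim: vs => //= v vs IH /andP[Hv Hvs]; rewrite closed_v0 // IH. Qed.

Lemma closed_invariant :
  (forall t j k, closed_t j t -> j <= k -> [/\ lift_t k t = t,
     forall s, subst_t k s t = t & forall sg, inst_t sg k t = t]) /\
  (forall v j k, closed_v j v -> j <= k -> [/\ lift_v k v = v,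
     forall s, subst_v k s v = v & forall sg, inst_v sg k v = v]).
Proof.
apply: term_value_ind => /=.
- move=> v IH j k Hv jk; have [-> E1 E2] := IH j k Hv jk.
  by split=> // ?; rewrite ?E1 ?E2.
- move=> t IHt v IHv j k /andP[Ht Hv] jk.
  have [-> Et1 Et2] := IHt j k Ht jk; have [-> Ev1 Ev2] := IHv j k Hv jk.
  by split=> // ?; rewrite ?Et1 ?Ev1 ?Et2 ?Ev2.
- by move=> n j k Hn jk; have -> : n < k by lia.
- move=> t IH j k Ht jk; have [-> E1 E2] := IH j.+1 k.+1 Ht jk.
  by split=> // ?; rewrite ?E1 ?E2.
Qed.

Lemma lift_closed_v v k : closed_v 0 v -> lift_v k v = v.
Proof. by move=> Hv; case: (proj2 closed_invariant v 0 k Hv (leq0n _)). Qed.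

Lemma subst_closed_v v s k : closed_v 0 v -> subst_v k s v = v.
Proof. by move=> Hv; case: (proj2 closed_invariant v 0 k Hv (leq0n _)). Qed.

Lemma inst_closed_v v sg k : closed_v 0 v -> inst_v sg k v = v.
Proof. by move=> Hv; case: (proj2 closed_invariant v 0 k Hv (leq0n _)). Qed.

Lemma inst_closed_vs vs sg k : all (closed_v 0) vs -> map (inst_v sg k) vs = vs.
Proof. by elim: vs => //= v vs IH /andP[Hv Hvs]; rewrite inst_closed_v // IH. Qed.

Lemma subst_lift :
  (forall t k s, subst_t k s (lift_t k t) = t) /\
  (forall v k s, subst_v k s (lift_v k v) = v).
Proof.
apply: term_value_ind => /=.
- by move=> v IH k s; rewrite IH.
- by move=> t IHt v IHv k s; rewrite IHt IHv.
- move=> n k s; case: ifP => /= nk; first by rewrite nk.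
  have -> : n.+1 < k = false by lia.
  by have -> : n.+1 == k = false by lia.
- by move=> t IH k s; rewrite IH.
Qed.

Lemma subst_inst s : closed_v 0 s ->
  (forall t d, subst_t d s t = inst_t [:: s] d t) /\
  (forall v d, subst_v d s v = inst_v [:: s] d v).
Proof.
move=> Hs; apply: term_value_ind => /=.
- by move=> v IH d; rewrite IH.
- by move=> t IHt v IHv d; rewrite IHt IHv.
- move=> n d; case: ltnP => // dn.
  case: eqP => [->|nd]; first by rewrite subnn.
  have -> : n - d < 1 = false by lia.
  by congr Var; lia.
- by move=> t IH d; rewrite lift_closed_v // IH.
Qed.

Lemma inst_nil :
  (forall t d, inst_t [::] d t = t) /\ (forall v d, inst_v [::] d v = v).
Proof.
apply: term_value_ind => /=.
- by move=> v IH d; rewrite IH.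
- by move=> t IHt v IHv d; rewrite IHt IHv.
- by move=> n d; case: ifP; rewrite ?subn0.
- by move=> t IH d; rewrite IH.
Qed.

Lemma inst_inst sg : all (closed_v 0) sg ->
  (forall t d tau, inst_t tau d (inst_t sg (d + size tau) t) = inst_t (tau ++ sg) d t) /\
  (forall v d tau, inst_v tau d (inst_v sg (d + size tau) v) = inst_v (tau ++ sg) d v).
Proof.
move=> Hsg; apply: term_value_ind => /=.
- by move=> v IH d tau; rewrite IH.
- by move=> t IHt v IHv d tau; rewrite IHt IHv.
- move=> n d tau; rewrite size_cat.
  case: (ltnP n d) => nd.
    have -> : n < d + size tau by lia.
    by rewrite /= nd.
  case: (ltnP n (d + size tau)) => ntau.
    have ntau' : n - d < size tau by lia.
    by rewrite /= ltnNge nd /= nth_cat ntau' ltn_addr.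
  case: (ltnP (n - (d + size tau)) (size sg)) => nsg.
    rewrite inst_closed_v; last exact: (all_nthP (Var 0) Hsg).
    have -> : n - d < size tau + size sg by lia.
    rewrite nth_cat; have -> : n - d < size tau = false by lia.
    by congr nth; lia.
  rewrite /=; have -> : n - size sg < d = false by lia.
  have -> : n - size sg - d < size tau = false by lia.
  have -> : n - d < size tau + size sg = false by lia.
  by congr Var; lia.
- by move=> t IH d tau; rewrite -IH addSn.
Qed.

Definition apps (t : term) (vs : seq value) : term := foldl App t vs.

Lemma apps_cat t vs us : apps t (vs ++ us) = apps (apps t vs) us.
Proof. exact: foldl_cat. Qed.

Lemma closed_apps j t vs : closed_t j (apps t vs) = closed_t j t && all (closed_v j) vs.
Proof. by elim: vs t => [|v vs IH] t /=; rewrite ?andbT // IH /= andbA. Qed.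

Lemma closed_nlam j p t : closed_t j (nlam p t) = closed_t (j + p) t.
Proof. by elim: p j => [|p IH] j /=; rewrite ?addn0 // IH addSnnS. Qed.

Lemma inst_apps sg d t vs :
  inst_t sg d (apps t vs) = apps (inst_t sg d t) (map (inst_v sg d) vs).
Proof. by elim: vs t => [|v vs IH] t //=; rewrite IH. Qed.

Lemma inst_nlam sg d p t : inst_t sg d (nlam p t) = nlam p (inst_t sg (d + p) t).
Proof. by elim: p d => [|p IH] d /=; rewrite ?addn0 // IH addSnnS. Qed.

Lemma det_steps_trans a b t u w :
  det_steps a t u -> det_steps b u w -> det_steps (a + b) t w.
Proof. by elim=> // n t1 t2 t3 H1 _ IH /IH; apply: det_cons. Qed.

Lemma det_step_apps t u vs : det_step t u -> det_step (apps t vs) (apps u vs).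
Proof. by elim: vs t u => //= v vs IH t u H; apply/IH/det_ctx. Qed.

Lemma det_steps_apps n t u vs : det_steps n t u -> det_steps n (apps t vs) (apps u vs).
Proof.
elim=> [t'|n' t1 t2 t3 /(det_step_apps vs) H1 _]; [exact: det_refl | exact: det_cons].
Qed.

Lemma det_steps_inv n t u : det_steps n.+1 t u -> exists2 t', det_step t t' & det_steps n t' u.
Proof. by move=> H; inversion H; exists t'. Qed.

Lemma beta_nlam vs body : all (closed_v 0) vs ->
  det_steps (size vs) (apps (nlam (size vs) body) vs) (inst_t (rev vs) 0 body).
Proof.
elim: vs body => [|v vs IH] body /=; first by rewrite (proj1 inst_nil); constructor.
case/andP=> Hv Hvs; apply: det_cons (det_step_apps _ (det_beta _ _)) _.
rewrite (proj1 (subst_inst Hv)) inst_nlam add0n.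
have := proj1 (inst_inst (sg := [:: v]) _) body 0 (rev vs).
rewrite add0n size_rev rev_cons -cats1 /= Hv => <- //; exact: IH.
Qed.

Lemma diverges_of_step_closed (P : term -> Prop) :
  (forall t, P t -> exists t', det_step t t' /\ P t') -> forall t, P t -> diverges t.
Proof.
move=> HP t Ht.
pose next (x : {t | P t}) : {t | P t} :=
  let e := constructive_indefinite_description _ (HP _ (proj2_sig x)) in
  exist _ (proj1_sig e) (proj2 (proj2_sig e)).
exists (fun i => proj1_sig (iter i next (exist _ t Ht))); split=> // i.
rewrite iterS /next /=.
by case: (constructive_indefinite_description _ _) => t' [].
Qed.

Lemma diverges_of_progress (P : term -> Prop) :
  (forall t, P t -> exists n t', det_steps n.+1 t t' /\ P t') ->
  forall n t u, det_steps n t u -> P u -> diverges t.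
Proof.
move=> HP n t u Htu Hu.
apply: (diverges_of_step_closed (P := fun t => exists n u, det_steps n t u /\ P u)); last first.
  by exists n, u.
move=> {n u Htu Hu} {}t [[|n] [u [Htu Hu]]].
  have [m [u' [Huu' Hu']]] := HP _ Hu; have [t' Ht' Ht'u'] := det_steps_inv Huu'.
  by inversion Htu; subst; exists t'; split=> //; exists m, u'.
have [t' Ht' Ht'u] := det_steps_inv Htu.
by exists t'; split=> //; exists n, u.
Qed.

(* Binds [p.+1] variables, not [p]. *)
Definition lamv (p : nat) (body : term) : value := Lam (nlam p body).

Lemma beta_lamv p body vs us u : all (closed_v 0) vs -> size vs = p.+1 ->
  inst_t (rev vs) 0 body = u ->
  det_steps p.+1 (apps (Val (lamv p body)) (vs ++ us)) (apps u us).
Proof.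
move=> Hvs Hsize <-; rewrite apps_cat; apply: det_steps_apps.
by have := beta_nlam body Hvs; rewrite Hsize.
Qed.

Lemma closed_scott_char N i j : closed_v j (scott_char N i).
Proof. by rewrite /= closed_nlam /=; lia. Qed.

Lemma closed_scott_str N w j : closed_v j (scott_str N w).
Proof. by elim: w j => [|i w IH] j; rewrite /= closed_nlam //= IH andbT; lia. Qed.

Lemma scott_char_select N i vs us : i < N -> all (closed_v 0) vs -> size vs = N ->
  det_steps N (apps (Val (scott_char N i)) (vs ++ us)) (apps (Val (nth (Var 0) vs i)) us).
Proof.
case: N => // N iN Hvs Hsize; apply: (@beta_lamv N (Val (Var (N - i)))) => //=.
rewrite size_rev Hsize subn0 nth_rev ?Hsize; last by lia.
by rewrite ltnS leq_subr; congr (Val (nth _ _ _)); lia.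
Qed.

Lemma scott_str_select_cons N i w vs ln us : i < N -> all (closed_v 0) vs -> size vs = N ->
  closed_v 0 ln ->
  det_steps N.+1 (apps (Val (scott_str N (i :: w))) (vs ++ ln :: us))
    (apps (Val (nth (Var 0) vs i)) (scott_str N w :: us)).
Proof.
move=> iN Hvs Hsize Hln; rewrite -cat_rcons.
apply: (@beta_lamv N (App (Val (Var (N - i))) (scott_str N w)));
  rewrite ?all_rcons ?Hln ?size_rcons ?Hsize //=.
rewrite inst_closed_v ?closed_scott_str // size_rev size_rcons Hsize subn0 rev_rcons.
have -> : N - i < N.+1 by lia.
case E: (N - i) => [|k]; first by lia.
by rewrite /= nth_rev ?Hsize; [congr (App (Val (nth _ _ _)) _); lia | lia].
Qed.

Lemma scott_str_select_nil N vs ln us : all (closed_v 0) vs -> size vs = N ->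
  closed_v 0 ln ->
  det_steps N.+1 (apps (Val (scott_str N [::])) (vs ++ ln :: us)) (apps (Val ln) us).
Proof.
move=> Hvs Hsize Hln; rewrite -cat_rcons.
apply: (@beta_lamv N (Val (Var 0))); rewrite ?all_rcons ?Hln ?size_rcons ?Hsize //=.
by rewrite size_rev size_rcons rev_rcons.
Qed.

#[local] Hint Resolve closed_scott_char closed_scott_str : core.

Lemma closed_lamv j p body : closed_v j (lamv p body) = closed_t (j + p.+1) body.
Proof. by rewrite /= closed_nlam addSnnS. Qed.

Lemma beta_lamv_eq vs us f p body u : f = lamv p body ->
  all (closed_v 0) vs -> size vs = p.+1 -> inst_t (rev vs) 0 body = u ->
  det_steps p.+1 (apps (Val f) (vs ++ us)) (apps u us).
Proof. by move=> ->; apply: beta_lamv. Qed.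
Arguments beta_lamv_eq vs us {f p body u}.

Ltac closed_args := repeat (apply/andP; split; first by auto).

(* Performs the [size vs] beta-steps of an abstraction applied to [vs ++ us],
   leaving the computation of the instantiated body; [cbn] (unlike [simpl])
   keeps the [simpl never] combinators folded, so closed ones can be dropped
   with [inst_closed_v]. *)
Tactic Notation "beta" uconstr(vs) uconstr(us) :=
  refine (beta_lamv_eq vs us erefl _ _ _);
  [by closed_args | by [] | rewrite ?inst_apps ?map_cat; cbn].

Definition cfg_val (S A R Q : value) : value := lamv 0 (apps (Val (Var 0)) [:: S; A; R; Q]).

(* [cfg_val] with the two tapes exchanged when the head moves right, so that
   a move always pops the first tape argument and pushes onto the second. *)
Definition cfg_dir (left : bool) (S A R Q : value) : value :=
  if left then cfg_val S A R Q else cfg_val R A S Q.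

Definition scott_cons (N b : nat) (x : value) : value :=
  Lam (nlam N (App (Val (Var (N - b))) x)).

Definition self_app (cfg : value) (w : nat) : term := App (App (Val (Var w)) (Var w)) cfg.

Lemma closed_cfg_val j S A R Q : closed_v j (cfg_val S A R Q) =
  [&& closed_v j.+1 S, closed_v j.+1 A, closed_v j.+1 R & closed_v j.+1 Q].
Proof. by rewrite /= !andbA. Qed.

Lemma closed_cfg_dir j left S A R Q :
  closed_v j.+1 S -> closed_v j.+1 A -> closed_v j.+1 R -> closed_v j.+1 Q ->
  closed_v j (cfg_dir left S A R Q).
Proof. by case: left => HS HA HR HQ /=; rewrite HS HA HR HQ. Qed.

Lemma closed_scott_cons j N b x : closed_v (j + N).+1 x -> closed_v j (scott_cons N b x).
Proof. by move=> Hx; rewrite /= closed_nlam /= addSn Hx andbT; lia. Qed.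

Lemma inst_cfg_dir sg d left S A R Q : inst_v sg d (cfg_dir left S A R Q) =
  cfg_dir left (inst_v sg d.+1 S) (inst_v sg d.+1 A) (inst_v sg d.+1 R) (inst_v sg d.+1 Q).
Proof. by case: left. Qed.

Lemma inst_cfg_val sg d S A R Q : inst_v sg d (cfg_val S A R Q) =
  cfg_val (inst_v sg d.+1 S) (inst_v sg d.+1 A) (inst_v sg d.+1 R) (inst_v sg d.+1 Q).
Proof. by []. Qed.

Lemma inst_scott_cons sg d N b : 0 < size sg ->
  inst_v sg d (scott_cons N b (Var (d + N).+1)) = scott_cons N b (nth (Var 0) sg 0).
Proof.
move=> Hsg; rewrite /= inst_nlam /=.
have -> : N - b < d.+1 + N by lia.
have -> : (d + N).+1 < d.+1 + N = false by lia.
have -> : (d + N).+1 - (d.+1 + N) = 0 by lia.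
by rewrite Hsg.
Qed.

Arguments scott_char : simpl never.
Arguments scott_str : simpl never.
Arguments cfg_val : simpl never.
Arguments cfg_dir : simpl never.
Arguments scott_cons : simpl never.

Section Simulation.
Variable M : TM.
Local Notation N := (nsym M).+1.
Local Notation sym := (scott_char N).
Local Notation state := (scott_char (nst M)).

(* [loop] applied to a configuration [\x. x S A R Q] selects [state_case q]
   with [Q], then the code [transition_term q a] with [A], and passes it
   [driver; S; R]; [self_app c w] is [w w c], i.e. [loop c] again. A move
   applies the tape it pops to [pops ++ [:: pop_nil; driver; other]], so that a
   Scott string [c :: rest] calls [pop_cons c] on [rest; driver; other] and the
   empty string calls [pop_nil] on [driver; other]. *)
Definition pop_cons (left : bool) (q' b c : nat) : value :=
  lamv 2 (self_app (cfg_dir left (Var 3) (sym c) (scott_cons N b (Var N.+2)) (state q')) 1).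

Definition pop_nil (left : bool) (q' b : nat) : value :=
  lamv 1 (self_app (cfg_dir left (scott_str N [::]) (sym (nsym M))
                     (scott_cons N b (Var N.+2)) (state q')) 1).

Definition pops (left : bool) (q' b : nat) : seq value := mkseq (pop_cons left q' b) N.

Definition move_term (left : bool) (q' b : nat) : value :=
  lamv 2 (apps (Val (Var (if left then 1 else 0)))
            (pops left q' b ++ [:: pop_nil left q' b; Var 2; Var (if left then 0 else 1)])).

Definition stay_term (q' b : nat) : value :=
  lamv 2 (self_app (cfg_val (Var 2) (sym b) (Var 1) (state q')) 2).

Definition halt_term (q a : nat) : value :=
  lamv 2 (Val (Lam (App (Val (Var 0)) (cfg_val (Var 3) (sym a) (Var 2) (state q))))).

Definition transition_term (q : 'I_(nst M)) (a : 'I_N) : value :=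
  match delta q a with
  | None => halt_term q a
  | Some (q', b, MStay) => stay_term q' b
  | Some (q', b, MLeft) => move_term true q' b
  | Some (q', b, MRight) => move_term false q' b
  end.

Definition transitions (q : 'I_(nst M)) : seq value := map (transition_term q) (enum 'I_N).

Definition state_case (q : 'I_(nst M)) : value :=
  lamv 3 (apps (Val (Var 1)) (transitions q ++ [:: Var 3; Var 2; Var 0])).

Definition state_cases : seq value := map state_case (enum 'I_(nst M)).

Definition dispatch : value :=
  lamv 4 (apps (Val (Var 1)) (state_cases ++ [:: Var 0; Var 4; Var 3; Var 2])).

Definition driver : value := lamv 1 (App (App (Val (Var 0)) dispatch) (Var 1)).

Definition loop : term := App (Val driver) driver.

Definition trans : term := nlam 2 (App (App loop (Var 0)) (Var 1)).

Arguments pop_cons : simpl never.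
Arguments pop_nil : simpl never.
Arguments pops : simpl never.
Arguments move_term : simpl never.
Arguments stay_term : simpl never.
Arguments halt_term : simpl never.
Arguments transition_term : simpl never.
Arguments transitions : simpl never.
Arguments state_case : simpl never.
Arguments state_cases : simpl never.
Arguments dispatch : simpl never.
Arguments driver : simpl never.

Lemma closed_pop_cons left q' b c : closed_v 0 (pop_cons left q' b c).
Proof.
rewrite /pop_cons closed_lamv; cbn; apply: closed_cfg_dir => //.
by apply: closed_scott_cons => /=; lia.
Qed.

Lemma closed_pop_nil left q' b : closed_v 0 (pop_nil left q' b).
Proof.
rewrite /pop_nil closed_lamv; cbn; apply: closed_cfg_dir => //.
by apply: closed_scott_cons => /=; lia.
Qed.

Lemma closed_pops left q' b : all (closed_v 0) (pops left q' b).
Proof. by rewrite /pops /mkseq all_map; apply/allP=> c _; apply: closed_pop_cons. Qed.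

Lemma closed_move_term left q' b : closed_v 0 (move_term left q' b).
Proof.
rewrite /move_term closed_lamv closed_apps all_cat all_closed_v0 ?closed_pops //.
by case: left; cbn; rewrite (closed_v0 _ (closed_pop_nil _ _ _)).
Qed.

Lemma closed_transition_term q a : closed_v 0 (transition_term q a).
Proof.
rewrite /transition_term; case: (delta q a) => [[[q' b] []]|].
- exact: closed_move_term.
- exact: closed_move_term.
- by rewrite /stay_term closed_lamv; cbn; rewrite closed_cfg_val !closed_scott_char.
- by rewrite /halt_term closed_lamv; cbn; rewrite closed_cfg_val !closed_scott_char.
Qed.

Lemma closed_transitions q : all (closed_v 0) (transitions q).
Proof. by rewrite /transitions all_map; apply/allP=> a _; apply: closed_transition_term. Qed.

Lemma closed_state_case q : closed_v 0 (state_case q).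
Proof. by rewrite /state_case closed_lamv closed_apps all_cat all_closed_v0 ?closed_transitions. Qed.

Lemma closed_state_cases : all (closed_v 0) state_cases.
Proof. by rewrite /state_cases all_map; apply/allP=> q _; apply: closed_state_case. Qed.

Lemma closed_dispatch : closed_v 0 dispatch.
Proof. by rewrite /dispatch closed_lamv closed_apps all_cat all_closed_v0 ?closed_state_cases. Qed.

Lemma closed_driver : closed_v 0 driver.
Proof. by rewrite /driver closed_lamv; cbn; rewrite closed_v0 ?closed_dispatch. Qed.

#[local] Hint Resolve closed_driver closed_dispatch : core.

Lemma size_state_cases : size state_cases = nst M.
Proof. by rewrite /state_cases size_map size_enum_ord. Qed.

Lemma size_transitions q : size (transitions q) = N.
Proof. by rewrite /transitions size_map size_enum_ord. Qed.

Lemma nth_state_cases (q : 'I_(nst M)) : nth (Var 0) state_cases q = state_case q.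
Proof. by rewrite /state_cases (nth_map q) ?size_enum_ord // nth_ord_enum. Qed.

Lemma nth_transitions q (a : 'I_N) : nth (Var 0) (transitions q) a = transition_term q a.
Proof. by rewrite /transitions (nth_map a) ?size_enum_ord // nth_ord_enum. Qed.

Lemma loop_transition S R (q : 'I_(nst M)) (a : 'I_N) : closed_v 0 S -> closed_v 0 R ->
  det_steps (12 + nst M + N) (App loop (cfg_val S (sym a) R (state q)))
    (apps (Val (transition_term q a)) [:: driver; S; R]).
Proof.
move=> HS HR; set C := cfg_val _ _ _ _.
have HC : closed_v 0 C by rewrite closed_cfg_val !(@closed_v0 _ 1).
have unfold_loop : det_steps 2 (App loop C) (apps (Val C) [:: dispatch; driver]).
  by beta [:: driver; C] [::]; rewrite inst_closed_v.
have open_cfg : det_steps 1 (apps (Val C) [:: dispatch; driver])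
                  (apps (Val dispatch) [:: S; sym a; R; state q; driver]).
  by beta [:: dispatch] [:: driver]; rewrite !inst_closed_v.
have pick_state_case : det_steps (5 + nst M)
    (apps (Val dispatch) [:: S; sym a; R; state q; driver])
    (apps (Val (state_case q)) [:: driver; S; sym a; R]).
  apply: (@det_steps_trans 5 _ _ (apps (Val (state q)) (state_cases ++ [:: driver; S; sym a; R]))).
    by beta [:: S; sym a; R; state q; driver] [::]; rewrite inst_closed_vs ?closed_state_cases.
  by rewrite -nth_state_cases; apply: scott_char_select;
    rewrite ?size_state_cases ?closed_state_cases.
have pick_transition : det_steps (4 + N)
    (apps (Val (state_case q)) [:: driver; S; sym a; R])
    (apps (Val (transition_term q a)) [:: driver; S; R]).
  apply: (@det_steps_trans 4 _ _ (apps (Val (sym a)) (transitions q ++ [:: driver; S; R]))).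
    by beta [:: driver; S; sym a; R] [::]; rewrite inst_closed_vs ?closed_transitions.
  by rewrite -nth_transitions; apply: scott_char_select;
    rewrite ?size_transitions ?closed_transitions.
have -> : 12 + nst M + N = 2 + (1 + ((5 + nst M) + (4 + N))) by lia.
apply: det_steps_trans unfold_loop (det_steps_trans open_cfg _).
exact: det_steps_trans pick_state_case pick_transition.
Qed.

Lemma halt_term_step q a S R : closed_v 0 S -> closed_v 0 R ->
  det_steps 3 (apps (Val (halt_term q a)) [:: driver; S; R])
    (Val (Lam (App (Val (Var 0)) (cfg_val S (sym a) R (state q))))).
Proof.
by move=> HS HR; beta [:: driver; S; R] [::]; rewrite inst_cfg_val; cbn; rewrite !inst_closed_v.
Qed.

Lemma stay_term_step q' b S R : closed_v 0 S -> closed_v 0 R ->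
  det_steps 3 (apps (Val (stay_term q' b)) [:: driver; S; R])
    (App loop (cfg_val S (sym b) R (state q'))).
Proof.
by move=> HS HR; beta [:: driver; S; R] [::]; rewrite inst_cfg_val; cbn; rewrite !inst_closed_v.
Qed.

Definition orient (left : bool) (X Y : value) : seq value :=
  if left then [:: X; Y] else [:: Y; X].

Lemma move_term_step left q' b X Y : closed_v 0 X -> closed_v 0 Y ->
  det_steps 3 (apps (Val (move_term left q' b)) (driver :: orient left X Y))
    (apps (Val X) (pops left q' b ++ [:: pop_nil left q' b; driver; Y])).
Proof.
move=> HX HY; case: left; [beta [:: driver; X; Y] [::] | beta [:: driver; Y; X] [::]];
  by rewrite inst_closed_vs ?closed_pops // inst_closed_v ?closed_pop_nil.
Qed.

Lemma pop_cons_step left q' b c X Y : closed_v 0 Y ->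
  det_steps 3 (apps (Val (pop_cons left q' b c)) [:: scott_str N X; driver; Y])
    (App loop (cfg_dir left (scott_str N X) (sym c) (scott_cons N b Y) (state q'))).
Proof.
move=> HY; beta [:: scott_str N X; driver; Y] [::].
by rewrite inst_cfg_dir; cbn; rewrite (@inst_scott_cons _ 1) // !inst_closed_v.
Qed.

Lemma pop_nil_step left q' b Y : closed_v 0 Y ->
  det_steps 2 (apps (Val (pop_nil left q' b)) [:: driver; Y])
    (App loop (cfg_dir left (scott_str N [::]) (sym (nsym M)) (scott_cons N b Y) (state q'))).
Proof.
move=> HY; beta [:: driver; Y] [::].
by rewrite inst_cfg_dir; cbn; rewrite (@inst_scott_cons _ 1) // !inst_closed_v.
Qed.

Lemma nth_pops left q' b c : c < N -> nth (Var 0) (pops left q' b) c = pop_cons left q' b c.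
Proof. by move=> cN; rewrite /pops nth_mkseq. Qed.

Lemma size_pops left q' b : size (pops left q' b) = N.
Proof. exact: size_mkseq. Qed.

Lemma move_cons_step left q' b c X Y : c < N -> closed_v 0 Y ->
  det_steps (7 + N) (apps (Val (move_term left q' b)) (driver :: orient left (scott_str N (c :: X)) Y))
    (App loop (cfg_dir left (scott_str N X) (sym c) (scott_cons N b Y) (state q'))).
Proof.
move=> cN HY; have -> : 7 + N = 3 + (N.+1 + 3) by lia.
apply: det_steps_trans (move_term_step _ _ _ _ HY) _ => //.
apply: det_steps_trans (pop_cons_step _ _ _ _ _ HY).
rewrite -nth_pops //; apply: scott_str_select_cons; rewrite ?size_pops ?closed_pops //.
exact: closed_pop_nil.
Qed.

Lemma move_nil_step left q' b Y : closed_v 0 Y ->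
  det_steps (6 + N) (apps (Val (move_term left q' b)) (driver :: orient left (scott_str N [::]) Y))
    (App loop (cfg_dir left (scott_str N [::]) (sym (nsym M)) (scott_cons N b Y) (state q'))).
Proof.
move=> HY; have -> : 6 + N = 3 + (N.+1 + 2) by lia.
apply: det_steps_trans (move_term_step _ _ _ _ HY) _ => //.
apply: det_steps_trans (pop_nil_step _ _ _ HY).
apply: scott_str_select_nil; rewrite ?size_pops ?closed_pops //.
exact: closed_pop_nil.
Qed.

Lemma enc_configE (s : seq 'I_N) a r q : enc_config (s, a, r, q) =
  cfg_val (scott_str N (map val (rev s))) (sym a) (scott_str N (map val r)) (state q).
Proof. by []. Qed.

Lemma closed_enc_config (C : config M) : closed_v 0 (enc_config C).
Proof.
by case: C => [[[s a] r] q]; rewrite enc_configE closed_cfg_val !closed_scott_char !closed_scott_str.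
Qed.

(* [loop_transition] takes [12 + nst M + N] steps, a transition code at most [7 + N]. *)
Definition step_cost : nat := 19 + nst M + N + N.

Lemma loop_then_transition j s a r q t : j <= 7 + N ->
  det_steps j (apps (Val (transition_term q a))
                 [:: driver; scott_str N (map val (rev s)); scott_str N (map val r)]) t ->
  exists2 j', 0 < j' <= step_cost & det_steps j' (App loop (enc_config (s, a, r, q))) t.
Proof.
move=> jN Hj; exists (12 + nst M + N + j); first by rewrite /step_cost; lia.
exact: det_steps_trans (loop_transition _ _ _ _) Hj.
Qed.

Lemma tm_step_simulation (C C' : config M) : tm_step C C' ->
  exists2 j, 0 < j <= step_cost & det_steps j (App loop (enc_config C)) (App loop (enc_config C')).
Proof.
case=> {C C'} [s a r q q' b | s c a r q q' b | a r q q' b | s a c r q q' b | s a q q' b] Hd.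
- apply: (loop_then_transition (j := 3)) => //; rewrite /transition_term Hd.
  by apply: stay_term_step.
- apply: (loop_then_transition (j := 7 + N)) => //; rewrite /transition_term Hd enc_configE rev_rcons.
  by apply: move_cons_step => //; apply: ltn_ord.
- apply: (loop_then_transition (j := 6 + N)) => //; rewrite /transition_term Hd.
  by apply: move_nil_step.
- apply: (loop_then_transition (j := 7 + N)) => //; rewrite /transition_term Hd enc_configE rev_rcons.
  by apply: move_cons_step => //; apply: ltn_ord.
- apply: (loop_then_transition (j := 6 + N)) => //; rewrite /transition_term Hd enc_configE rev_rcons.
  by apply: move_nil_step.
Qed.

Lemma final_simulation (C : config M) : final C ->
  det_steps (12 + nst M + N + 3) (App loop (enc_config C))
    (Val (Lam (App (Val (Var 0)) (enc_config C)))).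
Proof.
case: C => [[[s a] r] q] Hq; rewrite /final /= in Hq.
have Hd : delta q a = None by have := delta_dom q a; rewrite Hq eqxx; case: delta.
apply: det_steps_trans (loop_transition _ _ _ _) _ => //.
by rewrite /transition_term Hd; apply: halt_term_step.
Qed.

Lemma run_simulation n (C D : config M) : tm_steps n C D -> final D ->
  exists2 j, j <= n.+1 * step_cost &
    det_steps j (App loop (enc_config C)) (Val (Lam (App (Val (Var 0)) (enc_config D)))).
Proof.
elim=> {n C D} [C|n C C' D HCC' _ IH] HD.
  by exists (12 + nst M + N + 3); [rewrite /step_cost; lia | apply: final_simulation].
have [j /andP[_ Hj] HCC'j] := tm_step_simulation HCC'.
have [j' Hj' HC'D] := IH HD.
by exists (j + j'); [rewrite mulSn; lia | apply: det_steps_trans HCC'j HC'D].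
Qed.

Lemma closed_trans : closed_t 0 trans.
Proof. by cbn; rewrite (closed_v0 _ closed_driver). Qed.

Lemma trans_unfold k (C : config M) :
  det_steps 2 (App (App trans k) (enc_config C)) (App (App loop (enc_config C)) k).
Proof.
apply: det_cons (det_ctx _ (det_beta _ _)) _.
apply: det_cons (det_beta _ _) _; cbn.
by rewrite !(@subst_closed_v driver) //= (proj2 subst_lift); apply: det_refl.
Qed.

Definition halts (C : config M) : Prop := exists n D, final D /\ tm_steps n C D.

Lemma tm_step_total (C : config M) : ~ final C -> exists C', tm_step C C'.
Proof.
case: C => [[[s a] r] q]; rewrite /final /= => /eqP Hq.
have := delta_dom q a; rewrite Hq.
case E: (delta q a) => [[[q' b] []]|] // _.
- case/lastP: s => [|s c].
    by exists ([::], blank M, b :: r, q'); apply: tm_left_edge.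
  by exists (s, c, b :: r, q'); apply: tm_left.
- case: r => [|c r].
    by exists (rcons s b, blank M, [::], q'); apply: tm_right_edge.
  by exists (rcons s b, c, r, q'); apply: tm_right.
- by exists (s, b, r, q'); apply: tm_stay.
Qed.

Lemma nonhalting_step (C : config M) : ~ halts C -> exists2 C', tm_step C C' & ~ halts C'.
Proof.
move=> HC; have [|C' HCC'] := tm_step_total (C := C).
  by move=> HfC; apply: HC; exists 0, C; split=> //; apply: tm_refl.
by exists C' => // -[n [D [HD HC'D]]]; apply: HC; exists n.+1, D; split=> //; apply: tm_cons HC'D.
Qed.

(* Each machine step costs at least one reduction step, so the run never stalls. *)
Lemma nonhalting_diverges k (C : config M) :
  ~ halts C -> diverges (App (App trans k) (enc_config C)).
Proof.
move=> HC; pose P t := exists2 C', ~ halts C' & t = App (App loop (enc_config C')) k.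
apply: (diverges_of_progress (P := P) _ (trans_unfold k C)); last by exists C.
move=> _ [C' HC' ->]; have [C'' HC'C'' HC''] := nonhalting_step HC'.
have [[|j] // _ Hj] := tm_step_simulation HC'C''.
exists j, (App (App loop (enc_config C'')) k); split; last by exists C''.
exact: (det_steps_apps [:: k]).
Qed.
End Simulation.

Theorem mainTheorem8 (M : TM) :
  exists (trans : term) (c : nat),
    closed_t 0 trans /\
    forall (k : value) (C : config M),
      (forall (n : nat) (D : config M),
          final D -> tm_steps n C D ->
          exists m, m <= c * n.+1 /\
            det_steps m (App (App trans k) (enc_config C)) (App (Val k) (enc_config D))) /\
      ((~ exists (n : nat) (D : config M), final D /\ tm_steps n C D) ->
          diverges (App (App trans k) (enc_config C))).
Proof.
exists (trans M), (step_cost M + 3); split; first exact: closed_trans.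
move=> k C; split; last exact: nonhalting_diverges.
move=> n D HD HCD; have [j Hj HCD'] := run_simulation HCD HD.
exists (2 + (j + 1)); split; first by rewrite mulnDl mulnC; lia.
apply: det_steps_trans (trans_unfold k C) _.
apply: det_steps_trans (det_steps_apps [:: k] HCD') _.
apply: det_cons (det_beta _ _) _.
by rewrite /= subst_closed_v ?closed_enc_config //; apply: det_refl.
Qed.
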